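(* Let $G$ be a strongly connected digraph. The map $f_{\mathrm{imcor}}$ has at least one fixed point in $\operatorname{Adj}(G)$. Furthermore, $A^*\in\operatorname{Adj}(G)$ is a fixed point of $f_{\mathrm{imcor}}$ (i.e., $A^*\in f_{\mathrm{imcor}}(A^* )$) if and only if $A^*$ is weight-balanced.
   Context: A digraph $G=(V,E)$, $V=\{v_1,\dots,v_n\}$, $E\subseteq V\times V$; strongly connected means a directed path exists between every ordered pair of distinct vertices. $\operatorname{Adj}(G)$ is the set of $A=(a_{ij})\in\mathbb{R}^{n\times n}_{\geq0}$ with $a_{ij}>0$ iff $(v_i,v_j)\in E$. Imbalance: $\omega(v_i)=\sum_j a_{ji}-\sum_j a_{ij}$; $A$ is weight-balanced if all imbalances vanish. For $A\in\operatorname{Adj}(G)$, $a_i^*=\min\{a_{ik}:k\neq i,\ a_{ik}\neq0\}$ and $J_i^*=\{j\neq i: a_{ij}=a_i^*\}$. $f_{\mathrm{imcor}}(A)$ is the set of $B\in\operatorname{Adj}(G)$ such that for each $i$ there is $j_i^*\in J_i^*$ with $b_{ij}=a_{ij}+\omega(v_i)$ if $\omega(v_i)>0$ and $j=j_i^*$, and $b_{ij}=a_{ij}$ otherwise (imbalances computed w.r.t. $A$). *)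

(* Vertices v_1..v_n are the ordinals 'I_n; a digraph is an
   edge relation E : rel 'I_n (self-loops allowed, E ⊆ V × V). *)
From HB Require Import structures.
From mathcomp Require Import all_boot all_order all_algebra.
Set Implicit Arguments. Unset Strict Implicit. Unset Printing Implicit Defensive.
Import Order.TTheory GRing.Theory Num.Theory.
Local Open Scope ring_scope.

Definition strongly_connected (n : nat) (E : rel 'I_n) : Prop :=
  forall i j : 'I_n, i != j -> connect E i j.

Definition Adj (R : realFieldType) (n : nat) (E : rel 'I_n) (A : 'M[R]_n) : Prop :=
  forall i j : 'I_n, 0 <= A i j /\ (0 < A i j <-> E i j).

Definition imbalance (R : realFieldType) (n : nat) (A : 'M[R]_n) (i : 'I_n) : R :=
  \sum_(j < n) A j i - \sum_(j < n) A i j.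

Definition weight_balanced (R : realFieldType) (n : nat) (A : 'M[R]_n) : Prop :=
  forall i : 'I_n, imbalance A i = 0.

(* J_i^* = { j ≠ i : a_ij = a_i^* }, where a_i^* = min { a_ik : k ≠ i, a_ik ≠ 0 }:
   the j ≠ i with a_ij ≠ 0 and a_ij ≤ a_ik for all k ≠ i with a_ik ≠ 0. *)
Definition J_star (R : realFieldType) (n : nat) (A : 'M[R]_n) (i : 'I_n) : {set 'I_n} :=
  [set j | [&& j != i, A i j != 0 &
            [forall k, ((k != i) && (A i k != 0)) ==> (A i j <= A i k)]]].

(* B ∈ f_imcor(A) *)
Definition f_imcor (R : realFieldType) (n : nat) (E : rel 'I_n) (A B : 'M[R]_n) : Prop :=
  Adj E B /\
  forall i : 'I_n, exists2 js : 'I_n, js \in J_star A i &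
    forall j : 'I_n,
      B i j = if (0 < imbalance A i) && (j == js) then A i j + imbalance A i
              else A i j.

(* f_imcor adds a positive imbalance omega(v_i) to an entry of row i, so A is
   a fixed point only if no imbalance is positive; since the imbalances always
   sum to zero, this forces A to be weight-balanced.  Conversely a balanced
   matrix is fixed as soon as every J_i^* is nonempty, which strong
   connectivity guarantees.  A balanced matrix with support exactly E is
   obtained by adding, for every edge (u,v), the indicator of the closed walk
   formed by (u,v) and a path back from v to u. *)
From HB Require Import structures.
From mathcomp Require Import all_boot all_order all_algebra.
From mathcomp Require Import ring lra.
Import Order.TTheory GRing.Theory Num.Theory.
Local Open Scope ring_scope.

Section Imbalance.

Variables (R : realFieldType) (n : nat).
Implicit Types (A B : 'M[R]_n) (i j : 'I_n).

Lemma imbalance0 i : imbalance (0 : 'M[R]_n) i = 0.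
Proof. by rewrite /imbalance !big1 ?subr0 // => j _; rewrite mxE. Qed.

Lemma imbalanceD A B i : imbalance (A + B) i = imbalance A i + imbalance B i.
Proof.
rewrite /imbalance.
under eq_bigr do rewrite mxE.
under [X in _ - X]eq_bigr do rewrite mxE.
rewrite !big_split /=; lra.
Qed.

Lemma imbalance_delta a b i :
  imbalance (delta_mx a b : 'M[R]_n) i = (i == b)%:R - (i == a)%:R.
Proof.
rewrite /imbalance /delta_mx (bigD1 a) // [X in _ - X](bigD1 b) //= !mxE !eqxx andbT.
by rewrite !big1 ?addr0 // => j /negPf ji; rewrite mxE ji ?andbF.
Qed.

Lemma sum_imbalance A : \sum_i imbalance A i = 0.
Proof. by rewrite /imbalance sumrB exchange_big subrr. Qed.

Lemma imbalance_le0_weight_balanced A :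
  (forall i, imbalance A i <= 0) -> weight_balanced A.
Proof.
move=> le0 i; apply/eqP; rewrite -oppr_eq0; apply/eqP.
have nneg k : true -> 0 <= - imbalance A k by rewrite oppr_ge0.
apply: (psumr_eq0P nneg) => //.
by rewrite sumrN sum_imbalance oppr0.
Qed.

End Imbalance.

Section Circulations.

Variables (R : realFieldType) (n : nat) (E : rel 'I_n).
Implicit Types (M N : 'M[R]_n) (i j : 'I_n).

Definition circulation_on M :=
  [/\ forall i j, 0 <= M i j, forall i j, M i j != 0 -> E i j
    & weight_balanced M].

Lemma circulation_on0 : circulation_on 0.
Proof.
by split=> [i j|i j|i]; rewrite ?imbalance0 ?mxE ?eqxx.
Qed.

Lemma circulation_onD M N :
  circulation_on M -> circulation_on N -> circulation_on (M + N).
Proof.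
move=> [M0 ME Mbal] [N0 NE Nbal]; split=> [i j|i j|i].
- by rewrite mxE addr_ge0.
- rewrite mxE; have [-> | /ME //] := eqVneq (M i j) 0.
  by rewrite add0r => /NE.
- by rewrite imbalanceD Mbal Nbal addr0.
Qed.

Fixpoint walk_mx (x : 'I_n) (p : seq 'I_n) : 'M[R]_n :=
  if p is y :: p' then delta_mx x y + walk_mx y p' else 0.

Lemma imbalance_walk_mx x p i :
  imbalance (walk_mx x p) i = (i == last x p)%:R - (i == x)%:R.
Proof.
elim: p x => [|y p IHp] x /=; first by rewrite imbalance0 subrr.
by rewrite imbalanceD imbalance_delta IHp; lra.
Qed.

Lemma walk_mx_ge0 x p i j : 0 <= walk_mx x p i j.
Proof.
elim: p x => [|y p IHp] x /=; first by rewrite mxE.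
by rewrite mxE addr_ge0 // mxE ler0n.
Qed.

Lemma closed_walk_circulation x p :
  path E x p -> last x p = x -> circulation_on (walk_mx x p).
Proof.
move=> Ep closed; split=> [i j|i j|i]; first exact: walk_mx_ge0.
  elim: p x {closed} Ep => [|y p IHp] x /=; first by rewrite mxE eqxx.
  case/andP=> Exy Ep; rewrite !mxE.
  case: (boolP ((i == x) && (j == y))) => [/andP[/eqP-> /eqP->] //|_].
  by rewrite add0r; apply: IHp.
by rewrite imbalance_walk_mx closed subrr.
Qed.

Hypothesis hG : strongly_connected E.

Lemma edge_circulation u v :
  exists2 M, circulation_on M & E u v -> 0 < M u v.
Proof.
have [Euv | nEuv] := boolP (E u v); last by exists 0 => //; exact: circulation_on0.
have /connectP [p Ep back] : connect E v u.
  by have [-> | ] := eqVneq v u; [exact: connect0 | exact: hG].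
exists (walk_mx u (v :: p)) => [|_].
  by apply: closed_walk_circulation; rewrite //= Euv.
rewrite /= !mxE !eqxx /=; have := walk_mx_ge0 v p u v; lra.
Qed.

Lemma exists_balanced_Adj : exists2 A : 'M[R]_n, Adj E A & weight_balanced A.
Proof.
have [M Mcirc Mpos] := fin_all_exists2 (fun e : 'I_n * 'I_n => edge_circulation e.1 e.2).
pose A := \sum_e M e.
have [A0 AE Abal] : circulation_on A.
  by apply: big_ind => //; [exact: circulation_on0 | exact: circulation_onD].
exists A => // i j; split=> //; split=> [|Eij]; first by rewrite lt0r => /andP[/AE].
rewrite /A summxE (bigD1 (i, j)) //= ltr_pwDl ?Mpos //.
by apply: sumr_ge0 => e _; case: (Mcirc e).
Qed.

End Circulations.

Section OutEdges.

Variables (n : nat) (E : rel 'I_n).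

Lemma path_leaves x p : path E x p -> last x p != x -> exists2 k, k != x & E x k.
Proof.
elim: p x => [|y p IHp] x /=; first by rewrite eqxx.
case/andP=> Exy; have [-> | yx _ _] := eqVneq y x; [exact: IHp | by exists y].
Qed.

Lemma strongly_connected_out_edge :
  (1 < n)%N -> strongly_connected E -> forall i, exists2 k, k != i & E i k.
Proof.
move=> n_gt1 hG i; have [j ji] : exists j : 'I_n, j != i.
  have n_gt0 := ltnW n_gt1.
  have [-> | i_ne0] := eqVneq i (Ordinal n_gt0).
    by exists (Ordinal n_gt1).
  by exists (Ordinal n_gt0); rewrite eq_sym.
have /connectP [p Ep last_p] := hG i j ltac:(by rewrite eq_sym).
by apply: path_leaves Ep _; rewrite -last_p.
Qed.

End OutEdges.

Section FixedPoints.

Variables (R : realFieldType) (n : nat) (E : rel 'I_n).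
Implicit Types (A : 'M[R]_n) (i : 'I_n).

Lemma J_star_nonempty A i :
  (exists2 k, k != i & A i k != 0) -> exists js, js \in J_star A i.
Proof.
move=> [k ki Aik]; have k_ok : (k != i) && (A i k != 0) by rewrite ki.
exists [arg min_(j < k | (j != i) && (A i j != 0)) A i j]%O.
case: arg_minP => // j /andP[ji Aij] j_min.
by rewrite inE ji Aij; apply/forallP => l; apply/implyP; apply: j_min.
Qed.

Lemma f_imcor_fixed_imbalance_le0 A : f_imcor E A A -> forall i, imbalance A i <= 0.
Proof.
move=> [_ fixA] i; have [js _ /(_ js)] := fixA i.
rewrite eqxx andbT leNgt; case: ifP => // pos /eqP.
by rewrite -{1}[A i js]addr0 => /eqP/addrI imb0; rewrite -imb0 ltxx in pos.
Qed.

Lemma weight_balanced_f_imcor_fixed A :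
  Adj E A -> weight_balanced A -> (forall i, exists js, js \in J_star A i) ->
  f_imcor E A A.
Proof.
move=> adjA balA J_ne; split=> // i; have [js js_in] := J_ne i.
by exists js => // j; rewrite balA ltxx.
Qed.

End FixedPoints.

Theorem lemma4p2 (R : realFieldType) (n : nat) (E : rel 'I_n)
    (hn : (1 < n)%N) (hG : strongly_connected E) :
  (exists A : 'M[R]_n, Adj E A /\ f_imcor E A A) /\
  (forall A : 'M[R]_n, Adj E A -> (f_imcor E A A <-> weight_balanced A)).
Proof.
have J_ne (A : 'M[R]_n) : Adj E A -> forall i, exists js, js \in J_star A i.
  move=> adjA i; apply: J_star_nonempty.
  have [k ki Eik] := @strongly_connected_out_edge n E hn hG i.
  by exists k => //; have [_ /(_ Eik)] := (adjA i k).2; rewrite lt0r => /andP[].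
have fixedE (A : 'M[R]_n) : Adj E A -> (f_imcor E A A <-> weight_balanced A).
  move=> adjA; split=> [/f_imcor_fixed_imbalance_le0 /imbalance_le0_weight_balanced //|balA].
  exact: weight_balanced_f_imcor_fixed (J_ne A adjA).
split=> //; have [A adjA balA] := @exists_balanced_Adj R n E hG.
by exists A; split=> //; apply/fixedE.
Qed.
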